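(* Fix $I\in\mathbb{N}$. For $\rho \in [0,1]^I$ satisfying $\sum_{i=1}^I 2i \rho_i <1$, the $I\times I$ matrix $M=M(\rho)$ with entries $M_{ii}(\rho)=1-\sum_{j \neq i} 2(i \wedge j) \rho_j$ and $M_{ij}(\rho)=2(i\wedge j)\rho_j$ for $i\neq j$ is invertible. *)

From mathcomp Require Import all_boot all_order all_algebra.
Set Implicit Arguments. Unset Strict Implicit. Unset Printing Implicit Defensive.
Import Order.TTheory GRing.Theory Num.Theory.
Local Open Scope ring_scope.

(* Indices 1..I are represented by i : 'I_I with value i.+1. *)
Definition Mrho (R : realFieldType) (I : nat) (rho : 'I_I -> R) : 'M[R]_I :=
  \matrix_(i < I, j < I)
    if i == j then
      1 - \sum_(k < I | k != i) 2 * (minn i.+1 k.+1)%:R * rho k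
    else 2 * (minn i.+1 j.+1)%:R * rho j.

(* Write c i = \sum_k 2 (i+1 min k+1) rho_k, so that M = D + K P with
   D = diag(1 - c), P = diag(2 rho) and K = ((i+1) min (j+1))_ij.
   Since c i <= \sum_k 2 (k+1) rho_k < 1, D is positive definite; and
   K is a Gram matrix, min(i+1, j+1) = #{l | l <= i, l <= j}, hence positive
   semidefinite.  If M v = 0, pairing with P v gives
   v^T P D v + (P v)^T K (P v) = 0, two nonnegative terms, so P v = 0 and
   then D v = 0, i.e. v = 0. *)
From mathcomp Require Import all_boot all_order all_algebra.
From mathcomp Require Import ring.
Import Order.TTheory GRing.Theory Num.Theory.
Local Open Scope ring_scope.

Lemma gram_form_ge0 (R : realDomainType) (m n : nat) (g : 'I_m -> 'I_n -> R)
    (y : 'I_n -> R) :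
  0 <= \sum_(i < n) \sum_(j < n) (\sum_(l < m) g l i * g l j) * (y i * y j).
Proof.
have -> : \sum_(i < n) \sum_(j < n) (\sum_(l < m) g l i * g l j) * (y i * y j)
    = \sum_(l < m) (\sum_(i < n) g l i * y i) ^+ 2.
  under eq_bigr => i _ do
    (under eq_bigr => j _ do rewrite mulr_suml; rewrite exchange_big /=).
  rewrite exchange_big /=; apply: eq_bigr => l _.
  rewrite expr2 mulr_suml; apply: eq_bigr => i _.
  by rewrite mulr_sumr; apply: eq_bigr => j _; ring.
by apply: sumr_ge0 => l _; apply: sqr_ge0.
Qed.

Lemma sum_ord_leq (n m : nat) : (m < n)%N -> (\sum_(l < n) (l <= m)%N)%N = m.+1.
Proof.
move=> lt_mn; rewrite -(big_mkord xpredT (fun l => nat_of_bool (l <= m)%N)).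
rewrite (@big_cat_nat _ _ _ m.+1) //=.
rewrite (@eq_big_nat _ _ _ 0 m.+1 _ (fun=> 1%N)); last first.
  by move=> l /andP[_]; rewrite ltnS => ->.
rewrite (@eq_big_nat _ _ _ m.+1 n _ (fun=> 0%N)); last first.
  by move=> l /andP[lt_ml _]; rewrite leqNgt lt_ml.
by rewrite !sum_nat_const_nat muln1 muln0 addn0 subn0.
Qed.

Lemma minnSS_sum_leq (R : nzSemiRingType) (n : nat) (i j : 'I_n) :
  (minn i.+1 j.+1)%:R = \sum_(l < n) (l <= i)%N%:R * (l <= j)%N%:R :> R.
Proof.
rewrite minnSS -(@sum_ord_leq n) ?gtn_min ?ltn_ord // natr_sum.
by apply: eq_bigr => l _; rewrite leq_min -natrM mulnb.
Qed.

Lemma minn_form_ge0 (R : realDomainType) (n : nat) (y : 'I_n -> R) :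
  0 <= \sum_(i < n) \sum_(j < n) (minn i.+1 j.+1)%:R * (y i * y j).
Proof.
under eq_bigr => i _ do under eq_bigr => j _ do rewrite minnSS_sum_leq.
exact: gram_form_ge0.
Qed.

Section DiagonalPlusKernel.

Variables (R : realFieldType) (n : nat).
Variables (d p : 'I_n -> R) (k : 'I_n -> 'I_n -> R).
Hypothesis d_gt0 : forall i, 0 < d i.
Hypothesis p_ge0 : forall i, 0 <= p i.
Hypothesis k_form_ge0 :
  forall y, 0 <= \sum_(i < n) \sum_(j < n) k i j * (y i * y j).

Lemma diag_add_kernel_eq0 (v : 'I_n -> R) :
  (forall i, d i * v i + \sum_(j < n) k i j * (p j * v j) = 0) ->
  forall i, v i = 0.
Proof.
move=> eq_v.
pose y j := p j * v j.
have pair0 : \sum_(i < n) d i * p i * v i ^+ 2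
    + \sum_(i < n) \sum_(j < n) k i j * (y i * y j) = 0.
  rewrite -big_split /=; apply: big1 => i _.
  transitivity (y i * (d i * v i + \sum_(j < n) k i j * y j)).
    by rewrite mulrDr mulr_sumr; congr (_ + _); [rewrite /y; ring |
      apply: eq_bigr => j _; ring].
  by rewrite eq_v mulr0.
have diag_ge0 i : 0 <= d i * p i * v i ^+ 2.
  by rewrite mulr_ge0 ?sqr_ge0 // mulr_ge0 // ltW.
have /eqP := pair0; rewrite paddr_eq0 ?k_form_ge0 ?sumr_ge0 //.
case/andP=> /eqP diag0 _.
have y0 i : y i = 0.
  have /eqP := psumr_eq0P (fun i _ => diag_ge0 i) diag0 (i := i) isT.
  rewrite -mulrA mulf_eq0 (gt_eqF (d_gt0 i)) /= /y expr2 mulrA mulf_eq0.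
  by case/orP=> /eqP ->; rewrite ?mulr0.
move=> i; have := eq_v i.
rewrite big1 => [|j _]; last by rewrite -/(y j) y0 mulr0.
by rewrite addr0 => /eqP; rewrite mulf_eq0 gt_eqF //= => /eqP.
Qed.

Lemma diag_add_kernel_unitmx :
  \matrix_(i, j) ((i == j)%:R * d i + k i j * p j) \in unitmx.
Proof.
set M := \matrix_(i, j) _.
rewrite -unitmx_tr unitmxE unitfE; apply/negP => /det0P[v v_neq0 vM0].
apply/negP: v_neq0; apply/negPn/eqP/rowP => i; rewrite mxE.
apply: diag_add_kernel_eq0 => {}i.
transitivity ((v *m M^T) 0 i); last by rewrite vM0 mxE.
rewrite mxE; under [RHS]eq_bigr => j _ do rewrite !mxE mulrDr.
rewrite big_split /=; congr (_ + _); last by apply: eq_bigr => j _; ring.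
rewrite (bigD1 i) //= eqxx big1 ?addr0 => [|j ji]; first by rewrite mul1r mulrC.
by rewrite eq_sym (negbTE ji) mul0r mulr0.
Qed.

End DiagonalPlusKernel.

Lemma Mrho_diag_add_kernel (R : realFieldType) (I : nat) (rho : 'I_I -> R) :
  Mrho rho = \matrix_(i, j)
    ((i == j)%:R * (1 - \sum_(k < I) 2 * (minn i.+1 k.+1)%:R * rho k)
     + (minn i.+1 j.+1)%:R * (2 * rho j)).
Proof.
apply/matrixP => i j; rewrite !mxE.
case: eqP => [<-|_] /=; last by rewrite mul0r add0r; ring.
by rewrite [in RHS](bigD1 i) //= mul1r minnn; ring.
Qed.

Theorem lemma5p1 (R : realFieldType) (I : nat) (rho : 'I_I -> R)
  (hrho : forall i, 0 <= rho i <= 1)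
  (hsum : \sum_(i < I) 2 * (i.+1)%:R * rho i < 1) :
  Mrho rho \in unitmx.
Proof.
have rho_ge0 i : 0 <= rho i by case/andP: (hrho i).
rewrite Mrho_diag_add_kernel; apply: diag_add_kernel_unitmx => [i|i|y].
- rewrite subr_gt0; apply: le_lt_trans hsum; apply: ler_sum => k _.
  by rewrite ler_wpM2r // ler_wpM2l // ler_nat geq_minr.
- by rewrite mulr_ge0.
- exact: minn_form_ge0.
Qed.
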